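(* Let $\kappa>0$, $D_\kappa=\pi/\sqrt\kappa$, let $X$ be a complete CAT($\kappa$) space such that $d(v,v')<D_\kappa/2$ for all $v,v'\in X$, and let $T\colon X\to X$ be firmly $\kappa$-vicinal. If $\mathrm{Fix}(T)$ is nonempty, then for each $x\in X$, $\{T^nx\}$ is $\Delta$-convergent to an element of $\mathrm{Fix}(T)$.
   Context: A CAT($\kappa$) space ($\kappa>0$) is a $D_\kappa$-geodesic metric space in which every geodesic triangle of perimeter $<2D_\kappa$ satisfies the comparison inequality $d(p,q)\le\rho_\kappa(\bar p,\bar q)$ relative to comparison triangles in $M_\kappa=(\mathbb S^2,\rho_{\mathbb S^2}/\sqrt\kappa)$. $\{x_n\}$ is $\Delta$-convergent to $p$ if for every subsequence $\{x_{n_i}\}$, $p$ is the unique minimizer of $z\mapsto\limsup_i d(x_{n_i},z)$. With $\tilde C_z=\cos\sqrt\kappa\, d(Tz,z)$, $T$ is firmly $\kappa$-vicinal if for all $x,y\in X$: $\bigl(\tilde C_x^2(1+\tilde C_y^2)\tilde C_y+\tilde C_y^2(1+\tilde C_x^2)\tilde C_x\bigr)\cos\sqrt\kappa d(Tx,Ty)\ge\tilde C_x^2(1+\tilde C_y^2)\cos\sqrt\kappa d(Tx,y)+\tilde C_y^2(1+\tilde C_x^2)\cos\sqrt\kappa d(Ty,x)$. *)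

From Stdlib Require Import Reals Lra.
Open Scope R_scope.

Record is_metric {X : Type} (d : X -> X -> R) : Prop := {
  dist_nonneg : forall x y, 0 <= d x y;
  dist_eq0 : forall x y, d x y = 0 <-> x = y;
  dist_sym : forall x y, d x y = d y x;
  dist_tri : forall x y z, d x z <= d x y + d y z }.

Definition Dk (kappa : R) : R := PI / sqrt kappa.

Definition geodesic {X : Type} (d : X -> X -> R) (x y : X) (c : R -> X) : Prop :=
  c 0 = x /\ c (d x y) = y /\
  forall s t, 0 <= s <= d x y -> 0 <= t <= d x y -> d (c s) (c t) = Rabs (s - t).

Definition D_geodesic {X : Type} (d : X -> X -> R) (D : R) : Prop :=
  forall x y, d x y < D -> exists c, geodesic d x y c.

(** Model space M_kappa = (S^2, rho_{S^2} / sqrt kappa), S^2 the unit sphere of R^3. *)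
Definition pt3 := (R * R * R)%type.
Definition dot3 (u v : pt3) : R :=
  let '(a1, b1, c1) := u in let '(a2, b2, c2) := v in a1 * a2 + b1 * b2 + c1 * c2.
Definition on_S2 (u : pt3) : Prop := dot3 u u = 1.
Definition rho_S2 (u v : pt3) : R := acos (dot3 u v).
Definition rho_k (kappa : R) (u v : pt3) : R := rho_S2 u v / sqrt kappa.

(** x = c s is the point of the side [a,b] (geodesic c) at distance s from a,
    and xb is its comparison point on the side [ab,bb] of the comparison
    triangle in M_kappa (the point of the model segment at distance s from ab). *)
Definition side_pair {X : Type} (d : X -> X -> R) (kappa : R)
    (a b : X) (c : R -> X) (ab bb : pt3) (x : X) (xb : pt3) : Prop :=
  exists s, 0 <= s <= d a b /\ x = c s /\ on_S2 xb /\
    rho_k kappa ab xb = s /\ rho_k kappa ab xb + rho_k kappa xb bb = rho_k kappa ab bb.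

Definition CAT {X : Type} (kappa : R) (d : X -> X -> R) : Prop :=
  D_geodesic d (Dk kappa) /\
  forall (p q r : X) (cpq cqr crp : R -> X),
    geodesic d p q cpq -> geodesic d q r cqr -> geodesic d r p crp ->
    d p q + d q r + d r p < 2 * Dk kappa ->
    forall pb qb rb : pt3, on_S2 pb -> on_S2 qb -> on_S2 rb ->
      rho_k kappa pb qb = d p q -> rho_k kappa qb rb = d q r -> rho_k kappa rb pb = d r p ->
      let in_tri x xb :=
        side_pair d kappa p q cpq pb qb x xb \/
        side_pair d kappa q r cqr qb rb x xb \/
        side_pair d kappa r p crp rb pb x xb in
      forall x xb y yb, in_tri x xb -> in_tri y yb -> d x y <= rho_k kappa xb yb.

Definition complete {X : Type} (d : X -> X -> R) : Prop :=
  forall u : nat -> X,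
    (forall eps, 0 < eps -> exists N, forall m n, (N <= m)%nat -> (N <= n)%nat ->
        d (u m) (u n) < eps) ->
    exists l, forall eps, 0 < eps -> exists N, forall n, (N <= n)%nat -> d (u n) l < eps.

Definition is_limsup (u : nat -> R) (l : R) : Prop :=
  forall eps, 0 < eps ->
    (exists N, forall n, (N <= n)%nat -> u n < l + eps) /\
    (forall N, exists n, (N <= n)%nat /\ l - eps < u n).

Definition Delta_conv {X : Type} (d : X -> X -> R) (x : nat -> X) (p : X) : Prop :=
  forall phi : nat -> nat, (forall i, (phi i < phi (S i))%nat) ->
    forall lp, is_limsup (fun i => d (x (phi i)) p) lp ->
    forall z lz, is_limsup (fun i => d (x (phi i)) z) lz ->
      z <> p -> lp < lz.

Definition firmly_vicinal {X : Type} (kappa : R) (d : X -> X -> R) (T : X -> X) : Prop :=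
  let C z := cos (sqrt kappa * d (T z) z) in
  forall x y,
    (C x ^ 2 * (1 + C y ^ 2) * C y + C y ^ 2 * (1 + C x ^ 2) * C x)
       * cos (sqrt kappa * d (T x) (T y))
    >= C x ^ 2 * (1 + C y ^ 2) * cos (sqrt kappa * d (T x) y)
       + C y ^ 2 * (1 + C x ^ 2) * cos (sqrt kappa * d (T y) x).

From Pilot Require Import Defs.
From Stdlib Require Import Reals Lra Psatz Classical IndefiniteDescription.
From Coquelicot Require Import Rcomplements.
From Coquelicot Require Lim_seq.
Open Scope R_scope.

(* All distances are below D_kappa / 2, so [cosd x z := cos (sqrt kappa * d x z)] lies in
   (0, 1] and is a decreasing function of the distance.  Comparing a triangle [z w x] with a
   spherical one gives the midpoint inequality
     cosd x z + cosd x w <= 2 cos (sqrt kappa * d z w / 2) * cosd x m,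
   which makes near-maximizers of [w |-> liminf cosd (y n) w] close to each other; by
   completeness this function has a unique maximizer, the asymptotic center of [y].
   For a fixed point [q] firm vicinality makes [cosd (T^n x) q] nondecreasing, which gives
   asymptotic regularity and then [liminf cosd (y n) (T z) >= liminf cosd (y n) z] along the
   orbit, so the center of every subsequence of the orbit is a fixed point.  Along fixed
   points the cosines converge, so the centers of the orbit and of its subsequences agree,
   and this is Delta-convergence. *)

(** * Real analysis and spherical geometry *)

Lemma le_of_forall_lt_add a b K :
  0 <= K -> (forall eps, 0 < eps -> a < b + K * eps) -> a <= b.
Proof.
  intros HK H. destruct (Rle_dec a b) as [|Hn]; [assumption|].
  set (eps := (a - b) / (K + 1)).
  assert (Heps : 0 < eps) by (apply Rdiv_lt_0_compat; lra).
  assert (HKeps : K * eps < a - b).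
  { apply (Rmult_lt_reg_r (K + 1)); [lra|]. unfold eps. field_simplify; nra. }
  specialize (H eps Heps). lra.
Qed.

Lemma Rinv_INR_S_le N n : (0 < N)%nat -> (N <= n)%nat -> / INR (S n) <= / INR N.
Proof. intros H1 H2. apply Rinv_le_contravar; [apply lt_0_INR; lia | apply le_INR; lia]. Qed.

Lemma cos_lipschitz u v : Rabs (cos u - cos v) <= Rabs (u - v).
Proof.
  destruct (MVT_abs cos (fun c => - sin c) v u) as [c [Hc _]].
  { intros c _. apply derivable_pt_lim_cos. }
  rewrite Hc, Rabs_Ropp. rewrite <- (Rmult_1_l (Rabs (u - v))) at 2.
  apply Rmult_le_compat_r; [apply Rabs_pos|]. apply Rabs_le, SIN_bound.
Qed.

Lemma one_sub_cos_le t : 0 <= t -> 1 - cos t <= t.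
Proof.
  intros Ht. assert (L := cos_lipschitz t 0).
  rewrite cos_0, Rminus_0_r, (Rabs_right t) in L by lra. apply Rabs_le_between in L. lra.
Qed.

Lemma cos_ge_sub_of_le u v e :
  0 <= u <= PI -> 0 <= v <= PI -> 0 <= e -> u <= v + e -> cos v - e <= cos u.
Proof.
  intros Hu Hv He Huv. destruct (Rle_dec u v).
  - assert (cos v <= cos u) by (apply cos_decr_1; lra). lra.
  - assert (L := cos_lipschitz u v). rewrite (Rabs_right (u - v)) in L by lra.
    apply Rabs_le_between in L. lra.
Qed.

Lemma cos_le_1_sub_sqr_div3 a : 0 <= a <= PI / 2 -> cos a <= 1 - a ^ 2 / 3.
Proof.
  intros Ha. destruct (cos_bound a 0) as [_ H]; try lra.
  assert (HP := PI_4).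
  unfold cos_approx, cos_term, INR in H. simpl in H.
  assert (a ^ 2 <= 4) by nra. nra.
Qed.

(* The Gram determinant of three unit vectors with pairwise angles [A], [B], [C]:
   it is nonnegative exactly when these angles satisfy the triangle inequalities. *)
Lemma cos_gram_nonneg A B C :
  0 <= A -> 0 <= B -> Rabs (A - B) <= C -> C <= A + B -> A + B <= PI ->
  0 <= 1 - cos A ^ 2 - cos B ^ 2 - cos C ^ 2 + 2 * cos A * cos B * cos C.
Proof.
  intros HA HB H1 H2 H3. apply Rabs_le_between in H1.
  assert (E1 : cos C <= cos (A - B)).
  { destruct (Rle_dec B A).
    - apply cos_decr_1; lra.
    - rewrite <- (cos_neg (A - B)). apply cos_decr_1; lra. }
  assert (E2 : cos (A + B) <= cos C) by (apply cos_decr_1; lra).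
  rewrite cos_minus in E1. rewrite cos_plus in E2.
  assert (SA := sin2_cos2 A). assert (SB := sin2_cos2 B). unfold Rsqr in *.
  assert (Hs : sin A * sin A * (sin B * sin B) = (1 - cos A * cos A) * (1 - cos B * cos B))
    by (f_equal; lra).
  assert (P : 0 <= (cos A * cos B + sin A * sin B - cos C)
                   * (cos C - (cos A * cos B - sin A * sin B))) by (apply Rmult_le_pos; lra).
  lra.
Qed.

Lemma dot3_unit_bound u v : on_S2 u -> on_S2 v -> -1 <= dot3 u v <= 1.
Proof.
  destruct u as [[u1 u2] u3], v as [[v1 v2] v3]. unfold on_S2, dot3. cbn. intros Hu Hv.
  assert (H1 := pow2_ge_0 (u1 - v1)). assert (H2 := pow2_ge_0 (u2 - v2)).
  assert (H3 := pow2_ge_0 (u3 - v3)). assert (H4 := pow2_ge_0 (u1 + v1)).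
  assert (H5 := pow2_ge_0 (u2 + v2)). assert (H6 := pow2_ge_0 (u3 + v3)).
  split; nra.
Qed.

(* In the plane spanned by [(cos h, sin h, 0)] and [(cos h, - sin h, 0)], whose midpoint
   on the sphere is [(1, 0, 0)], the projection of the sought point is forced; the Gram
   inequality says that it lies in the unit disc, so the point can be lifted to the sphere. *)
Lemma model_point_exists A B h :
  0 <= A < PI / 2 -> 0 <= B < PI / 2 -> 0 < h < PI / 4 ->
  Rabs (A - B) <= 2 * h -> 2 * h <= A + B ->
  exists r : pt3, on_S2 r /\ dot3 r (cos h, sin h, 0) = cos A /\
    dot3 (cos h, - sin h, 0) r = cos B /\ dot3 r (1, 0, 0) = (cos A + cos B) / (2 * cos h).
Proof.
  intros HA HB Hh H1 H2.
  assert (Hk : 0 < cos h) by (apply cos_gt_0; lra).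
  assert (Hs : 0 < sin h) by (apply sin_gt_0; lra).
  assert (Hks : sin h * sin h + cos h * cos h = 1)
    by (assert (E := sin2_cos2 h); unfold Rsqr in E; lra).
  assert (HC : cos (2 * h) = cos h * cos h - sin h * sin h) by apply cos_2a.
  set (u := (cos A + cos B) / (2 * cos h)). set (v := (cos A - cos B) / (2 * sin h)).
  assert (Hdisc : 0 <= 1 - u ^ 2 - v ^ 2).
  { assert (G := cos_gram_nonneg A B (2 * h) ltac:(lra) ltac:(lra) H1 H2 ltac:(lra)).
    rewrite HC in G.
    replace (1 - u ^ 2 - v ^ 2) with
      ((4 * cos h ^ 2 * sin h ^ 2 - (cos A + cos B) ^ 2 * sin h ^ 2
        - (cos A - cos B) ^ 2 * cos h ^ 2) / (4 * cos h ^ 2 * sin h ^ 2))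
      by (unfold u, v; field; lra).
    apply Rle_mult_inv_pos;
      [| assert (0 < cos h ^ 2 * sin h ^ 2) by (apply Rmult_lt_0_compat; apply pow_lt; lra); lra].
    replace (4 * cos h ^ 2 * sin h ^ 2) with (1 - (cos h * cos h - sin h * sin h) ^ 2) by nra.
    nra. }
  assert (Ht := sqrt_sqrt _ Hdisc).
  exists (u, v, sqrt (1 - u ^ 2 - v ^ 2)). unfold on_S2, dot3.
  repeat split; [lra| unfold u, v; field; lra | unfold u, v; field; lra | ring].
Qed.

(* Firm vicinality at a pair [(x, z)]: [Cn], [Cz] are the cosines of the displacements of [x]
   and [z], and [a], [b], [g] those of [d(Tx, Tz)], [d(Tx, z)], [d(x, Tz)], with [a <= g + e].
   When [x] is almost fixed, it says that [b] is almost at most [Cz a]. *)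
Lemma vicinal_perturb Cn Cz a b g e :
  0 <= Cn <= 1 -> 0 <= Cz <= 1 -> 0 <= a <= 1 -> 0 <= b <= 1 -> 0 <= g <= 1 ->
  0 <= e -> a <= g + e ->
  (Cn ^ 2 * (1 + Cz ^ 2) * Cz + Cz ^ 2 * (1 + Cn ^ 2) * Cn) * a >=
    Cn ^ 2 * (1 + Cz ^ 2) * b + Cz ^ 2 * (1 + Cn ^ 2) * g ->
  b - 4 * (1 - Cn) - 2 * e <= Cz * a.
Proof.
  intros HCn HCz Ha Hb Hg He Hag Hv.
  assert (HCn2 : 0 <= Cn ^ 2 <= 1) by (split; nra).
  assert (HCz2 : 0 <= Cz ^ 2 <= 1) by (split; nra).
  assert (HP : 0 <= Cz ^ 2 * (1 + Cn ^ 2) <= 2) by (split; nra).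
  assert (H1 : - 2 * e <= Cz ^ 2 * (1 + Cn ^ 2) * (g - Cn * a)).
  { assert (Cn * a <= a) by (rewrite <- (Rmult_1_l a) at 2; apply Rmult_le_compat_r; lra).
    destruct (Rle_dec 0 (g - Cn * a)).
    - assert (0 <= Cz ^ 2 * (1 + Cn ^ 2) * (g - Cn * a)) by (apply Rmult_le_pos; lra). lra.
    - assert (0 <= (2 - Cz ^ 2 * (1 + Cn ^ 2)) * - (g - Cn * a)) by (apply Rmult_le_pos; lra).
      lra. }
  (* The weight [Cn^2] of [Y] is controlled by the hypothesis, the weight
     [1 - Cn^2 <= 2 (1 - Cn)] by the boundedness of [Y]. *)
  set (Y := Cz * a - b).
  assert (H2 : - 2 * e <= Cn ^ 2 * ((1 + Cz ^ 2) * Y)) by (unfold Y; nra).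
  assert (HY : - 2 <= (1 + Cz ^ 2) * Y).
  { assert (0 <= (1 + Cz ^ 2) * (Cz * a)) by (apply Rmult_le_pos; [|apply Rmult_le_pos]; lra).
    assert ((1 + Cz ^ 2) * b <= 2 * 1) by (apply Rmult_le_compat; lra).
    unfold Y. lra. }
  assert (H3 : - 4 * (1 - Cn) <= (1 - Cn ^ 2) * ((1 + Cz ^ 2) * Y)).
  { assert (0 <= 1 - Cn ^ 2 <= 2 * (1 - Cn)) by (split; nra). nra. }
  assert (H4 : - 2 * e - 4 * (1 - Cn) <= (1 + Cz ^ 2) * Y) by lra.
  enough (- 2 * e - 4 * (1 - Cn) <= Y) by (unfold Y in *; lra).
  destruct (Rle_dec 0 Y); [lra|]. nra.
Qed.

(** * Lower limits *)

Definition is_liminf (u : nat -> R) (l : R) : Prop :=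
  forall eps, 0 < eps ->
    (exists N, forall n, (N <= n)%nat -> l - eps < u n) /\
    (forall N, exists n, (N <= n)%nat /\ u n < l + eps).

Lemma is_liminf_ex u lo hi : (forall n, lo <= u n <= hi) -> exists l, is_liminf u l.
Proof.
  intros Hb. destruct (Lim_seq.ex_LimInf_seq u) as [[l| |] Hl]; simpl in Hl.
  - exists l. intros eps He. destruct (Hl (mkposreal eps He)) as [H1 H2].
    split; [exact H2 | exact H1].
  - destruct (Hl hi) as [N HN]. specialize (HN N (le_n N)). specialize (Hb N). lra.
  - destruct (Hl lo 0%nat) as [n [_ Hn]]. specialize (Hb n). lra.
Qed.

Lemma is_liminf_bounds u l lo hi :
  (forall n, lo <= u n <= hi) -> is_liminf u l -> lo <= l <= hi.
Proof.
  intros Hb Hl. split; apply (le_of_forall_lt_add _ _ 1); try lra; intros eps He;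
    destruct (Hl eps He) as [[N HN] HF].
  - destruct (HF 0%nat) as [n [_ Hn]]. specialize (Hb n). lra.
  - specialize (HN N (le_n N)). specialize (Hb N). lra.
Qed.

Lemma is_limsup_bounds u l lo hi :
  (forall n, lo <= u n <= hi) -> is_limsup u l -> lo <= l <= hi.
Proof.
  intros Hb Hl. split; apply (le_of_forall_lt_add _ _ 1); try lra; intros eps He;
    destruct (Hl eps He) as [[N HN] HF].
  - specialize (HN N (le_n N)). specialize (Hb N). lra.
  - destruct (HF 0%nat) as [n [_ Hn]]. specialize (Hb n). lra.
Qed.

Lemma Un_cv_const c : Un_cv (fun _ => c) c.
Proof.
  intros eps He. exists 0%nat. intros n _. unfold R_dist. rewrite Rminus_eq_0, Rabs_R0. exact He.
Qed.

Lemma Un_cv_scal_0 a u : Un_cv u 0 -> Un_cv (fun n => a * u n) 0.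
Proof.
  intros Hu eps He. assert (Ha := Rabs_pos a).
  destruct (Hu (eps / (Rabs a + 1))) as [N HN]; [apply Rdiv_lt_0_compat; lra|].
  exists N. intros n Hn. specialize (HN n Hn). unfold R_dist in *.
  rewrite Rminus_0_r in *. rewrite Rabs_mult.
  apply (Rle_lt_trans _ ((Rabs a + 1) * Rabs (u n))); [assert (H0 := Rabs_pos (u n)); nra|].
  apply (Rmult_lt_compat_l (Rabs a + 1)) in HN; [|lra].
  replace ((Rabs a + 1) * (eps / (Rabs a + 1))) with eps in HN by (field; lra). exact HN.
Qed.

Lemma Un_cv_subseq u l (phi : nat -> nat) :
  (forall i, (phi i < phi (S i))%nat) -> Un_cv u l -> Un_cv (fun i => u (phi i)) l.
Proof.
  intros Hphi Hu eps He. destruct (Hu eps He) as [N HN]. exists N. intros i Hi.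
  apply HN. enough (i <= phi i)%nat by lia.
  clear -Hphi. induction i; [lia|]. specialize (Hphi i). lia.
Qed.

Lemma is_liminf_Un_cv u l : Un_cv u l -> is_liminf u l.
Proof.
  intros Hu eps He. destruct (Hu eps He) as [N HN]. split.
  - exists N. intros n Hn. specialize (HN n Hn). unfold R_dist in HN.
    apply Rabs_lt_between' in HN. lra.
  - intros M. exists (max N M). split; [lia|].
    specialize (HN (max N M) ltac:(lia)). unfold R_dist in HN. apply Rabs_lt_between' in HN. lra.
Qed.

Lemma is_liminf_le_vanishing u v e K C a b :
  0 <= K -> Un_cv e 0 -> (forall n, v n <= K * u n + C + e n) ->
  is_liminf u a -> is_liminf v b -> b <= K * a + C.
Proof.
  intros HK He Hvu Ha Hb. apply (le_of_forall_lt_add _ _ (K + 2)); [lra|]. intros eps Heps.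
  destruct (Hb eps Heps) as [[N1 HN1] _]. destruct (He eps Heps) as [N2 HN2].
  destruct (Ha eps Heps) as [_ HF]. destruct (HF (max N1 N2)) as [n [Hn Hun]].
  specialize (HN1 n ltac:(lia)). specialize (HN2 n ltac:(lia)). specialize (Hvu n).
  unfold R_dist in HN2. rewrite Rminus_0_r in HN2. apply Rabs_lt_between in HN2.
  assert (K * u n <= K * (a + eps)) by (apply Rmult_le_compat_l; lra). lra.
Qed.

Lemma is_liminf_unique u a b : is_liminf u a -> is_liminf u b -> a = b.
Proof.
  intros Ha Hb.
  assert (Hle : forall a b, is_liminf u a -> is_liminf u b -> b <= 1 * a + 0).
  { intros a' b' Ha' Hb'.
    apply (is_liminf_le_vanishing u u (fun _ => 0)); auto using Un_cv_const; intros; lra. }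
  assert (H1 := Hle a b Ha Hb). assert (H2 := Hle b a Hb Ha). lra.
Qed.

Lemma is_liminf_add_le u v a b c :
  is_liminf u a -> is_liminf v b -> is_liminf (fun n => u n + v n) c -> a + b <= c.
Proof.
  intros Ha Hb Hc. apply (le_of_forall_lt_add _ _ 3); [lra|]. intros eps He.
  destruct (Ha eps He) as [[N1 HN1] _]. destruct (Hb eps He) as [[N2 HN2] _].
  destruct (Hc eps He) as [_ HF]. destruct (HF (max N1 N2)) as [n [Hn Hcn]].
  specialize (HN1 n ltac:(lia)). specialize (HN2 n ltac:(lia)). lra.
Qed.

Lemma is_limsup_scal a u l : 0 < a -> is_limsup u l -> is_limsup (fun n => a * u n) (a * l).
Proof.
  intros Ha Hl eps He. destruct (Hl (eps / a)) as [[N HN] HF]; [apply Rdiv_lt_0_compat; lra|].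
  assert (E : a * (eps / a) = eps) by (field; lra). split.
  - exists N. intros n Hn. specialize (HN n Hn).
    apply (Rmult_lt_compat_l a) in HN; lra.
  - intros M. destruct (HF M) as [n [Hn Hun]]. exists n. split; [exact Hn|].
    apply (Rmult_lt_compat_l a) in Hun; lra.
Qed.

Lemma is_liminf_cos_limsup u l :
  (forall n, 0 <= u n <= PI) -> is_limsup u l ->
  0 <= l <= PI /\ is_liminf (fun n => cos (u n)) (cos l).
Proof.
  intros Hb Hl. assert (Hlb := is_limsup_bounds u l 0 PI Hb Hl). split; [exact Hlb|].
  intros eps He. destruct (Hl (eps / 2)) as [[N HN] HF]; [lra|]. split.
  - exists N. intros n Hn. specialize (HN n Hn).
    assert (H := cos_ge_sub_of_le (u n) l (eps / 2) (Hb n) Hlb ltac:(lra) ltac:(lra)). lra.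
  - intros M. destruct (HF M) as [n [Hn Hun]]. exists n. split; [exact Hn|].
    assert (H := cos_ge_sub_of_le l (u n) (eps / 2) Hlb (Hb n) ltac:(lra) ltac:(lra)). lra.
Qed.

(** * Bounded CAT(kappa) spaces *)

Definition cosd {X : Type} (d : X -> X -> R) (kappa : R) (a b : X) : R :=
  cos (sqrt kappa * d a b).

(* [c] is the asymptotic center of [y] read through [cos (sqrt kappa * d)]: since the cosine
   is decreasing, maximizing the liminf of the cosines is minimizing the limsup of distances. *)
Definition cos_center {X : Type} (d : X -> X -> R) (kappa : R) (y : nat -> X) (c : X) : Prop :=
  forall w lc lw, is_liminf (fun n => cosd d kappa (y n) c) lc ->
    is_liminf (fun n => cosd d kappa (y n) w) lw -> w <> c -> lw < lc.

Section BoundedCAT.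

Context {X : Type} (d : X -> X -> R) (kappa : R).
Hypothesis kappa_gt0 : 0 < kappa.
Hypothesis d_metric : is_metric d.
Hypothesis d_CAT : CAT kappa d.
Hypothesis d_diam : forall v v', d v v' < Dk kappa / 2.

Local Notation s := (sqrt kappa).
Local Notation cd := (cosd d kappa).

Lemma sqrt_kappa_gt0 : 0 < s.
Proof. apply sqrt_lt_R0, kappa_gt0. Qed.

Lemma Dk_gt0 : 0 < Dk kappa.
Proof. apply Rdiv_lt_0_compat; [apply PI_RGT_0 | apply sqrt_kappa_gt0]. Qed.

Lemma angle_bound a b : 0 <= s * d a b < PI / 2.
Proof.
  assert (Hs := sqrt_kappa_gt0). assert (H0 := dist_nonneg d d_metric a b).
  assert (Hd := d_diam a b). unfold Dk in Hd. split; [nra|].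
  apply (Rmult_lt_compat_l s) in Hd; [|exact Hs].
  replace (s * (PI / s / 2)) with (PI / 2) in Hd by (field; lra). exact Hd.
Qed.

Lemma cosd_bounds a b : 0 < cd a b <= 1.
Proof.
  assert (H := angle_bound a b). split; [apply cos_gt_0; lra | apply COS_bound].
Qed.

Lemma cosd_sym a b : cd a b = cd b a.
Proof. unfold cosd. rewrite (Defs.dist_sym d d_metric). reflexivity. Qed.

Lemma cosd_refl a : cd a a = 1.
Proof. unfold cosd. rewrite (proj2 (dist_eq0 d d_metric a a) eq_refl), Rmult_0_r. apply cos_0. Qed.

Lemma cosd_lipschitz a b z : Rabs (cd a z - cd b z) <= s * d a b.
Proof.
  unfold cosd. eapply Rle_trans; [apply cos_lipschitz|].
  assert (Hs := sqrt_kappa_gt0).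
  rewrite <- Rmult_minus_distr_l, Rabs_mult, (Rabs_right s) by lra.
  apply Rmult_le_compat_l; [lra|]. apply Rabs_le.
  assert (T1 := Defs.dist_tri d d_metric a b z). assert (T2 := Defs.dist_tri d d_metric b a z).
  rewrite (Defs.dist_sym d d_metric b a) in T2. lra.
Qed.

Lemma rho_k_eq u v r : 0 <= s * r <= PI -> dot3 u v = cos (s * r) -> rho_k kappa u v = r.
Proof.
  intros Hr Huv. assert (Hs := sqrt_kappa_gt0).
  unfold rho_k, rho_S2. rewrite Huv, acos_cos by exact Hr. field. lra.
Qed.

Lemma rho_k_dist u v a b : dot3 u v = cd a b -> rho_k kappa u v = d a b.
Proof. intros H. apply rho_k_eq; [assert (T := angle_bound a b); lra | exact H]. Qed.

Lemma cat_vertex_side p q r cpq cqr crp pb qb rb t mb :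
  geodesic d p q cpq -> geodesic d q r cqr -> geodesic d r p crp ->
  on_S2 pb -> on_S2 qb -> on_S2 rb ->
  rho_k kappa pb qb = d p q -> rho_k kappa qb rb = d q r -> rho_k kappa rb pb = d r p ->
  0 <= t <= d p q -> on_S2 mb -> rho_k kappa pb mb = t ->
  rho_k kappa pb mb + rho_k kappa mb qb = rho_k kappa pb qb ->
  d r (cpq t) <= rho_k kappa rb mb.
Proof.
  intros Gpq Gqr Grp Sp Sq Sr Epq Eqr Erp Ht Sm Epm Emq.
  destruct d_CAT as [_ Hcat].
  assert (Hper : d p q + d q r + d r p < 2 * Dk kappa).
  { assert (H1 := d_diam p q). assert (H2 := d_diam q r). assert (H3 := d_diam r p).
    assert (H := Dk_gt0). lra. }
  apply (Hcat p q r cpq cqr crp Gpq Gqr Grp Hper pb qb rb Sp Sq Sr Epq Eqr Erp).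
  - right; right. exists 0. split; [split; [lra | apply dist_nonneg, d_metric]|].
    split; [symmetry; apply Grp|]. split; [exact Sr|].
    assert (E : rho_k kappa rb rb = 0)
      by (apply rho_k_eq; rewrite Rmult_0_r;
          [split; [lra | apply Rlt_le, PI_RGT_0] | rewrite cos_0; exact Sr]).
    rewrite E. split; ring.
  - left. exists t. repeat split; auto; lra.
Qed.

Lemma cosd_ge_of_le_rho_k u v a b :
  on_S2 u -> on_S2 v -> d a b <= rho_k kappa u v -> dot3 u v <= cd a b.
Proof.
  intros Su Sv Hle. assert (Hs := sqrt_kappa_gt0).
  assert (Hdot := dot3_unit_bound u v Su Sv).
  unfold rho_k, rho_S2 in Hle. apply (Rmult_le_compat_l s) in Hle; [|lra].
  replace (s * (acos (dot3 u v) / s)) with (acos (dot3 u v)) in Hle by (field; lra).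
  rewrite <- (cos_acos (dot3 u v) Hdot). assert (H := angle_bound a b).
  assert (H' := acos_bound (dot3 u v)). apply cos_decr_1; lra.
Qed.

Lemma geodesic_ex a b : exists c, geodesic d a b c.
Proof.
  destruct d_CAT as [Hgeo _]. apply Hgeo.
  assert (H := d_diam a b). assert (H' := Dk_gt0). lra.
Qed.

(* The comparison triangle of [z, w, x] is placed with [z], [w] at [(cos h, +- sin h, 0)],
   so that the midpoint of [z, w] corresponds to [(1, 0, 0)]. *)
Lemma cosd_geodesic_midpoint z w g x :
  0 < d z w -> geodesic d z w g ->
  cd x z + cd x w <= 2 * cos (s * d z w / 2) * cd x (g (d z w / 2)).
Proof.
  intros Hzw Hg. assert (Hs := sqrt_kappa_gt0).
  destruct (geodesic_ex w x) as [cwx Hcwx]. destruct (geodesic_ex x z) as [cxz Hcxz].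
  set (h := s * d z w / 2).
  assert (Hh : 0 < h < PI / 4) by (assert (H := angle_bound z w); unfold h; split; nra).
  set (A := s * d x z). set (B := s * d x w).
  assert (HA := angle_bound x z). assert (HB := angle_bound x w). fold A in HA. fold B in HB.
  destruct (model_point_exists A B h) as [rb [Sr [Erp [Eqr Erm]]]]; try lra.
  { unfold A, B, h. apply Rabs_le_between.
    assert (T1 := Defs.dist_tri d d_metric x w z). assert (T2 := Defs.dist_tri d d_metric x z w).
    rewrite (Defs.dist_sym d d_metric w z) in T1. split; nra. }
  { unfold A, B, h. assert (T := Defs.dist_tri d d_metric z x w).
    rewrite (Defs.dist_sym d d_metric z x) in T. nra. }
  set (pb := (cos h, sin h, 0) : pt3). set (qb := (cos h, - sin h, 0) : pt3).
  set (mb := (1, 0, 0) : pt3).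
  assert (Hk : cos h ^ 2 + sin h ^ 2 = 1) by (assert (E := sin2_cos2 h); unfold Rsqr in E; lra).
  assert (Sp : on_S2 pb) by (unfold on_S2, pb, dot3; lra).
  assert (Sq : on_S2 qb) by (unfold on_S2, qb, dot3; lra).
  assert (Sm : on_S2 mb) by (unfold on_S2, mb, dot3; lra).
  assert (Epq : rho_k kappa pb qb = d z w).
  { apply rho_k_dist. unfold cosd, pb, qb, dot3.
    replace (s * d z w) with (2 * h) by (unfold h; field). rewrite cos_2a. ring. }
  assert (Hhalf : s * (d z w / 2) = h) by (unfold h; field).
  assert (Epm : rho_k kappa pb mb = d z w / 2).
  { apply rho_k_eq; rewrite Hhalf; [lra | unfold pb, mb, dot3; ring]. }
  assert (Emq : rho_k kappa mb qb = d z w / 2).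
  { apply rho_k_eq; rewrite Hhalf; [lra | unfold mb, qb, dot3; ring]. }
  assert (Hcmp := cat_vertex_side z w x g cwx cxz pb qb rb (d z w / 2) mb Hg Hcwx Hcxz
    Sp Sq Sr Epq (rho_k_dist _ _ _ _ (eq_trans Eqr (cosd_sym x w))) (rho_k_dist _ _ _ _ Erp)
    ltac:(lra) Sm Epm ltac:(rewrite Epm, Emq, Epq; lra)).
  assert (Hcos := cosd_ge_of_le_rho_k rb mb x (g (d z w / 2)) Sr Sm Hcmp).
  assert (Hc : 0 < cos h) by (apply cos_gt_0; lra).
  unfold mb in Hcos. rewrite Erm in Hcos. unfold cosd at 1 2. fold A B h.
  replace (cos A + cos B) with (2 * cos h * ((cos A + cos B) / (2 * cos h))) by (field; lra).
  apply Rmult_le_compat_l; lra.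
Qed.

Lemma cosd_midpoint z w :
  exists m, forall x, cd x z + cd x w <= 2 * cos (s * d z w / 2) * cd x m.
Proof.
  destruct (Req_dec (d z w) 0) as [Hzw|Hzw].
  - apply (dist_eq0 d d_metric) in Hzw. subst w. exists z. intros x.
    rewrite (proj2 (dist_eq0 d d_metric z z) eq_refl), Rmult_0_r, Rdiv_0_l, cos_0. lra.
  - destruct (geodesic_ex z w) as [g Hg]. exists (g (d z w / 2)). intros x.
    apply cosd_geodesic_midpoint; [|exact Hg].
    assert (H := dist_nonneg d d_metric z w). lra.
Qed.

Lemma cosd_liminf_ex y w : exists l, is_liminf (fun n => cd (y n) w) l.
Proof. apply (is_liminf_ex _ 0 1). intros n. assert (H := cosd_bounds (y n) w). lra. Qed.

Lemma cosd_liminf_bounds y w l : is_liminf (fun n => cd (y n) w) l -> 0 <= l <= 1.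
Proof. apply is_liminf_bounds. intros n. assert (H := cosd_bounds (y n) w). lra. Qed.

Lemma cosd_liminf_lipschitz y z w lz lw :
  is_liminf (fun n => cd (y n) z) lz -> is_liminf (fun n => cd (y n) w) lw ->
  lw <= lz + s * d z w.
Proof.
  intros Hz Hw. rewrite <- (Rmult_1_l lz).
  apply (is_liminf_le_vanishing (fun n => cd (y n) z) (fun n => cd (y n) w) (fun _ => 0) 1
    (s * d z w) _ _ ltac:(lra) (Un_cv_const 0)); auto.
  intros n. rewrite (cosd_sym _ w), (cosd_sym _ z).
  assert (L := cosd_lipschitz w z (y n)). apply Rabs_le_between in L.
  rewrite (Defs.dist_sym d d_metric z w). lra.
Qed.

Lemma cosd_liminf_midpoint y z w :
  exists m, forall lz lw lm, is_liminf (fun n => cd (y n) z) lz ->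
    is_liminf (fun n => cd (y n) w) lw -> is_liminf (fun n => cd (y n) m) lm ->
    lz + lw <= 2 * cos (s * d z w / 2) * lm.
Proof.
  destruct (cosd_midpoint z w) as [m Hm]. exists m. intros lz lw lm Hz Hw Hlm.
  set (k := cos (s * d z w / 2)).
  assert (Hk : 0 <= k) by (assert (H := angle_bound z w); apply Rlt_le, cos_gt_0; lra).
  destruct (is_liminf_ex (fun n => cd (y n) z + cd (y n) w) 0 2) as [l Hl].
  { intros n. assert (H1 := cosd_bounds (y n) z). assert (H2 := cosd_bounds (y n) w). lra. }
  apply (Rle_trans _ l); [exact (is_liminf_add_le _ _ _ _ _ Hz Hw Hl)|].
  rewrite <- (Rplus_0_r (2 * k * lm)).
  apply (is_liminf_le_vanishing (fun n => cd (y n) m) (fun n => cd (y n) z + cd (y n) w)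
    (fun _ => 0) (2 * k) 0 _ _ ltac:(lra) (Un_cv_const 0)); auto.
  intros n. specialize (Hm (y n)). unfold k. lra.
Qed.

Section AsymptoticCenter.

Variable y : nat -> X.

Local Notation cd_liminf w l := (is_liminf (fun n => cd (y n) w) l).

Hypothesis d_complete : complete d.

Section Supremum.

Variable M : R.
Hypothesis M_ub : forall v l, cd_liminf v l -> l <= M.
Hypothesis M_gt0 : 0 < M.

(* With [h := s d(z, w) / 2], the midpoint inequality gives [2 (M - delta) <= 2 cos h M],
   and [cos h <= 1 - h^2 / 3]. *)
Lemma near_maximizers_close z w lz lw delta :
  cd_liminf z lz -> cd_liminf w lw -> 0 <= delta -> M - delta <= lz -> M - delta <= lw ->
  (s * d z w / 2) ^ 2 <= 3 * delta / M.
Proof.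
  intros Hz Hw Hdelta Hlz Hlw.
  destruct (cosd_liminf_midpoint y z w) as [m Hm].
  destruct (cosd_liminf_ex y m) as [lm Hlm].
  assert (Hmid := Hm lz lw lm Hz Hw Hlm).
  assert (HlmM := M_ub m lm Hlm). assert (Hlm0 := cosd_liminf_bounds y m lm Hlm).
  assert (Hb := angle_bound z w).
  assert (Hk := cos_le_1_sub_sqr_div3 (s * d z w / 2) ltac:(split; nra)).
  assert (Hk0 : 0 <= cos (s * d z w / 2)) by (apply Rlt_le, cos_gt_0; nra).
  apply (Rmult_le_reg_r M); [lra|]. replace (3 * delta / M * M) with (3 * delta) by (field; lra).
  nra.
Qed.

Lemma near_maximizers_cauchy (W : nat -> X) :
  (forall n, exists l, cd_liminf (W n) l /\ M - / INR (S n) < l) ->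
  forall eps, 0 < eps -> exists N, forall m n, (N <= m)%nat -> (N <= n)%nat -> d (W m) (W n) < eps.
Proof.
  intros HW eps He. assert (Hs := sqrt_kappa_gt0).
  destruct (archimed_cor1 (M * (s * eps) ^ 2 / 12)) as [N [HN HN0]].
  { apply Rdiv_lt_0_compat; [apply Rmult_lt_0_compat; [lra | apply pow_lt; nra] | lra]. }
  exists N. intros m n Hm Hn.
  destruct (HW m) as [lm [Hlm Hlm']]. destruct (HW n) as [ln [Hln Hln']].
  assert (Hi1 := Rinv_INR_S_le N m HN0 Hm). assert (Hi2 := Rinv_INR_S_le N n HN0 Hn).
  assert (HNpos : 0 < / INR N) by (apply Rinv_0_lt_compat, lt_0_INR; lia).
  assert (Hcl := near_maximizers_close (W m) (W n) lm ln (/ INR N) Hlm Hln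
                   ltac:(lra) ltac:(lra) ltac:(lra)).
  set (q := / INR N) in *.
  assert (Hsmall : 3 * q / M < (s * eps / 2) ^ 2).
  { apply (Rmult_lt_reg_r M); [lra|]. replace (3 * q / M * M) with (3 * q) by (field; lra).
    replace ((s * eps / 2) ^ 2 * M) with (M * (s * eps) ^ 2 / 4) by field. lra. }
  assert (H0 := dist_nonneg d d_metric (W m) (W n)).
  apply Rnot_le_lt. intros Hge.
  assert ((s * eps / 2) ^ 2 <= (s * d (W m) (W n) / 2) ^ 2) by (apply pow_incr; split; nra).
  lra.
Qed.

Lemma cosd_liminf_sup_attained :
  (forall b, is_upper_bound (fun l => exists w, cd_liminf w l) b -> M <= b) ->
  exists c, cd_liminf c M.
Proof.
  intros M_least.
  assert (Hnear : forall n, exists w, exists l, cd_liminf w l /\ M - / INR (S n) < l).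
  { intros n. apply NNPP. intros Hno.
    assert (Hpos : 0 < / INR (S n)) by (apply Rinv_0_lt_compat, lt_0_INR; lia).
    enough (M <= M - / INR (S n)) by lra.
    apply M_least. intros l [w Hw]. apply Rnot_lt_le. intros Hlt. apply Hno. exists w, l. auto. }
  destruct (functional_choice _ Hnear) as [W HW].
  destruct (d_complete W (near_maximizers_cauchy W HW)) as [c Hc]. exists c.
  destruct (cosd_liminf_ex y c) as [lc Hlc].
  replace M with lc; [exact Hlc|].
  apply Rle_antisym; [exact (M_ub c lc Hlc)|].
  assert (Hs := sqrt_kappa_gt0).
  apply (le_of_forall_lt_add _ _ (1 + s)); [lra|]. intros eps He.
  destruct (Hc eps He) as [N1 HN1]. destruct (archimed_cor1 eps He) as [N2 [HN2 HN2pos]].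
  destruct (HW (max N1 N2)) as [l [Hl Hl']].
  assert (Hi := Rinv_INR_S_le N2 (max N1 N2) HN2pos ltac:(lia)).
  assert (Hlip := cosd_liminf_lipschitz y c (W (max N1 N2)) lc l Hlc Hl).
  specialize (HN1 (max N1 N2) ltac:(lia)).
  rewrite (Defs.dist_sym d d_metric) in HN1. nra.
Qed.

End Supremum.

Lemma cos_center_exists :
  (exists w0 l0, cd_liminf w0 l0 /\ 0 < l0) -> exists c, cos_center d kappa y c.
Proof.
  intros [w0 [l0 [H0 Hl0]]].
  destruct (completeness (fun l => exists w, cd_liminf w l)) as [M HM].
  { exists 1. intros l [w Hw]. exact (proj2 (cosd_liminf_bounds y w l Hw)). }
  { exists l0, w0. exact H0. }
  assert (HM0 : 0 < M) by (assert (l0 <= M) by (apply (proj1 HM); exists w0; exact H0); lra).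
  assert (HMub : forall v l, cd_liminf v l -> l <= M)
    by (intros v l Hv; apply (proj1 HM); exists v; exact Hv).
  destruct (cosd_liminf_sup_attained M HMub HM0 (proj2 HM)) as [c Hc]. exists c.
  intros w lc lw Hlc Hw Hwc. rewrite (is_liminf_unique _ _ _ Hlc Hc).
  apply Rnot_le_lt. intros HMw. apply Hwc.
  assert (Hcl := near_maximizers_close M HMub HM0 c w M lw 0 Hc Hw
                   ltac:(lra) ltac:(lra) ltac:(lra)).
  replace (3 * 0 / M) with 0 in Hcl by (field; lra).
  assert (Hs := sqrt_kappa_gt0). assert (H0d := dist_nonneg d d_metric c w).
  assert (Hcw : d c w = 0).
  { apply Rle_antisym; [|exact H0d]. apply Rnot_lt_le. intros Hpos.
    assert (0 < (s * d c w / 2) ^ 2) by (apply pow_lt; nra). lra. }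
  symmetry. apply (dist_eq0 d d_metric). exact Hcw.
Qed.

End AsymptoticCenter.

Lemma Delta_conv_of_cos_center y p :
  (forall phi : nat -> nat, (forall i, (phi i < phi (S i))%nat) ->
     cos_center d kappa (fun i => y (phi i)) p) ->
  Delta_conv d y p.
Proof.
  intros Hc phi Hphi lp Hlp z lz Hlz Hzp. assert (Hs := sqrt_kappa_gt0).
  assert (Hb : forall v i, 0 <= s * d (y (phi i)) v <= PI).
  { intros v i. assert (H := angle_bound (y (phi i)) v). assert (H' := PI_RGT_0). lra. }
  destruct (is_liminf_cos_limsup _ _ (Hb p) (is_limsup_scal _ _ _ Hs Hlp)) as [Hbp Hp].
  destruct (is_liminf_cos_limsup _ _ (Hb z) (is_limsup_scal _ _ _ Hs Hlz)) as [Hbz Hz].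
  assert (Hlt := Hc phi Hphi z _ _ Hp Hz Hzp).
  apply Rnot_le_lt. intros Hle.
  assert (cos (s * lp) <= cos (s * lz)) by (apply cos_decr_1; nra). lra.
Qed.

(** * Firmly vicinal maps *)

Section FirmlyVicinal.

Variable T : X -> X.
Hypothesis T_vicinal : firmly_vicinal kappa d T.

Lemma vicinal_fixed z q : T q = q -> cd z q <= cd (T z) z * cd (T z) q.
Proof.
  intros Hq. assert (V := T_vicinal z q). cbv beta zeta in V. rewrite Hq in V.
  fold (cd (T z) z) (cd (T z) q) (cd q z) (cd q q) in V. rewrite cosd_refl in V.
  rewrite cosd_sym. assert (H := cosd_bounds (T z) z). set (Cz := cd (T z) z) in *.
  apply (Rmult_le_reg_l (1 + Cz ^ 2)); nra.
Qed.

Lemma vicinal_step x z : cd x z - 8 * s * d (T x) x <= cd (T z) z * cd x (T z).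
Proof.
  assert (V := T_vicinal x z). cbv beta zeta in V.
  fold (cd (T x) x) (cd (T z) z) (cd (T x) (T z)) (cd (T x) z) (cd (T z) x) in V.
  rewrite (cosd_sym (T z) x) in V.
  assert (Hs := sqrt_kappa_gt0). assert (Hd := dist_nonneg d d_metric (T x) x).
  assert (La := cosd_lipschitz (T x) x (T z)). apply Rabs_le_between in La.
  assert (Lb := cosd_lipschitz (T x) x z). apply Rabs_le_between in Lb.
  assert (Hc := one_sub_cos_le (s * d (T x) x) ltac:(nra)).
  assert (B1 := cosd_bounds (T x) x). assert (B2 := cosd_bounds (T z) z).
  assert (B3 := cosd_bounds (T x) (T z)). assert (B4 := cosd_bounds (T x) z).
  assert (B5 := cosd_bounds x (T z)).
  assert (P := vicinal_perturb (cd (T x) x) (cd (T z) z) (cd (T x) (T z)) (cd (T x) z)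
                 (cd x (T z)) (s * d (T x) x) ltac:(lra) ltac:(lra) ltac:(lra) ltac:(lra)
                 ltac:(lra) ltac:(nra) ltac:(lra) V).
  assert (cd (T z) z * (cd (T x) (T z) - cd x (T z)) <= s * d (T x) x).
  { destruct (Rle_dec (cd (T x) (T z) - cd x (T z)) 0); nra. }
  unfold cosd in Hc. fold (cd (T x) x) in Hc. lra.
Qed.

Section Iterates.

Variable x : X.
Local Notation xs n := (Nat.iter n T x).

Hypothesis T_has_fixed_point : exists q, T q = q.
Hypothesis d_complete : complete d.

Lemma fejer_step q n :
  T q = q -> (1 - cd (xs (S n)) (xs n)) * cd (xs (S n)) q <= cd (xs (S n)) q - cd (xs n) q.
Proof. intros Hq. assert (H := vicinal_fixed (xs n) q Hq). simpl. lra. Qed.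

Lemma fejer_growing q : T q = q -> Un_growing (fun n => cd (xs n) q).
Proof.
  intros Hq n. assert (H := fejer_step q n Hq).
  assert (B1 := cosd_bounds (xs (S n)) (xs n)). assert (B2 := cosd_bounds (xs (S n)) q).
  assert (0 <= (1 - cd (xs (S n)) (xs n)) * cd (xs (S n)) q) by (apply Rmult_le_pos; lra). lra.
Qed.

Lemma fejer_cv q : T q = q -> exists L, 0 < L /\ Un_cv (fun n => cd (xs n) q) L.
Proof.
  intros Hq. assert (Hg := fejer_growing q Hq).
  destruct (growing_cv _ Hg) as [L HL].
  { exists 1. intros r [n Hn]. subst r. apply cosd_bounds. }
  exists L. split; [|exact HL].
  assert (H0 := growing_ineq _ L Hg HL 0). assert (B := cosd_bounds x q). simpl in H0. lra.
Qed.

(* The gain [e (S n) - e n] of the increasing sequence [e n := cd (xs n) q] dominates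
   [(1 - cos theta_n) e 0 >= theta_n ^ 2 e 0 / 3], where [theta_n := s d(xs (S n), xs n)]. *)
Lemma asymptotic_regular : Un_cv (fun n => d (xs (S n)) (xs n)) 0.
Proof.
  destruct T_has_fixed_point as [q Hq]. intros eps He. assert (Hs := sqrt_kappa_gt0).
  assert (Hg := fejer_growing q Hq). destruct (fejer_cv q Hq) as [L [_ HL]].
  assert (He0 := cosd_bounds x q).
  set (delta := cd x q * (s * eps) ^ 2 / 6).
  assert (Hdelta : 0 < delta)
    by (apply Rdiv_lt_0_compat; [apply Rmult_lt_0_compat; [lra | apply pow_lt; nra] | lra]).
  destruct (HL delta Hdelta) as [N HN]. exists N. intros n Hn.
  assert (A1 := HN n Hn). assert (A2 := HN (S n) ltac:(lia)). unfold R_dist in A1, A2.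
  apply Rabs_lt_between' in A1. apply Rabs_lt_between' in A2.
  assert (Hst := fejer_step q n Hq).
  assert (Hmono : cd x q <= cd (xs (S n)) q) by (apply Rge_le, (growing_prop _ (S n) 0 Hg); lia).
  assert (B := cosd_bounds (xs (S n)) (xs n)).
  assert (Hgap : (1 - cd (xs (S n)) (xs n)) * cd x q < 2 * delta).
  { assert ((1 - cd (xs (S n)) (xs n)) * cd x q <= (1 - cd (xs (S n)) (xs n)) * cd (xs (S n)) q)
      by (apply Rmult_le_compat_l; lra). lra. }
  assert (Hang := angle_bound (xs (S n)) (xs n)).
  assert (Hcos := cos_le_1_sub_sqr_div3 _ (conj (proj1 Hang) (Rlt_le _ _ (proj2 Hang)))).
  fold (cd (xs (S n)) (xs n)) in Hcos.
  assert (Hsq : (s * d (xs (S n)) (xs n)) ^ 2 < (s * eps) ^ 2).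
  { apply (Rmult_lt_reg_r (cd x q)); [lra|]. unfold delta in Hgap. nra. }
  unfold R_dist. rewrite Rminus_0_r, Rabs_right by (apply Rle_ge, dist_nonneg, d_metric).
  apply Rnot_le_lt. intros Hle.
  assert ((s * eps) ^ 2 <= (s * d (xs (S n)) (xs n)) ^ 2) by (apply pow_incr; split; nra). lra.
Qed.

Section Subsequence.

Variable phi : nat -> nat.
Hypothesis phi_incr : forall i, (phi i < phi (S i))%nat.

Lemma cosd_liminf_T_ge z l1 l2 :
  is_liminf (fun i => cd (xs (phi i)) z) l1 -> is_liminf (fun i => cd (xs (phi i)) (T z)) l2 ->
  l1 <= l2.
Proof.
  intros H1 H2.
  assert (Hcv := Un_cv_scal_0 (8 * s) _
                   (Un_cv_subseq _ _ phi phi_incr asymptotic_regular)).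
  assert (Hpt : forall i, cd (xs (phi i)) z <=
            cd (T z) z * cd (xs (phi i)) (T z) + 0 + 8 * s * d (xs (S (phi i))) (xs (phi i))).
  { intros i. assert (H := vicinal_step (xs (phi i)) z). simpl. lra. }
  assert (Hle := is_liminf_le_vanishing _ _ _ (cd (T z) z) 0 l2 l1
                   ltac:(apply Rlt_le, cosd_bounds) Hcv Hpt H2 H1).
  assert (Hl2 := cosd_liminf_bounds _ _ _ H2). assert (Hz := cosd_bounds (T z) z).
  assert (cd (T z) z * l2 <= l2) by nra. lra.
Qed.

Lemma cos_center_fixed c : cos_center d kappa (fun i => xs (phi i)) c -> T c = c.
Proof.
  intros Hc. apply NNPP. intros HTc.
  destruct (cosd_liminf_ex (fun i => xs (phi i)) c) as [lc Hlc].
  destruct (cosd_liminf_ex (fun i => xs (phi i)) (T c)) as [lT HlT].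
  assert (H1 := cosd_liminf_T_ge c lc lT Hlc HlT).
  assert (H2 := Hc (T c) lc lT Hlc HlT HTc). lra.
Qed.

Lemma iterates_cos_center : exists c, T c = c /\ cos_center d kappa (fun i => xs (phi i)) c.
Proof.
  destruct T_has_fixed_point as [q Hq]. destruct (fejer_cv q Hq) as [L [HL HcvL]].
  destruct (cos_center_exists (fun i => xs (phi i)) d_complete) as [c Hc].
  { exists q, L. split; [|exact HL]. apply is_liminf_Un_cv, (Un_cv_subseq _ _ phi phi_incr HcvL). }
  exists c. split; [exact (cos_center_fixed c Hc) | exact Hc].
Qed.

End Subsequence.

(* The centers of the whole orbit and of any subsequence are both fixed points, along which
   the cosines converge by Fejer monotonicity; maximality on both sides forces them to agree. *)
Lemma cos_center_subseq p :
  T p = p -> cos_center d kappa (fun n => xs n) p ->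
  forall phi : nat -> nat, (forall i, (phi i < phi (S i))%nat) ->
    cos_center d kappa (fun i => xs (phi i)) p.
Proof.
  intros Hp Hcp phi Hphi.
  destruct (iterates_cos_center phi Hphi) as [c [Hc Hcc]].
  replace p with c; [exact Hcc|]. apply NNPP. intros Hcp_ne.
  destruct (fejer_cv p Hp) as [Lp [_ Hcvp]]. destruct (fejer_cv c Hc) as [Lc [_ Hcvc]].
  assert (H1 := Hcp c Lp Lc (is_liminf_Un_cv _ _ Hcvp) (is_liminf_Un_cv _ _ Hcvc) Hcp_ne).
  assert (H2 := Hcc p Lc Lp (is_liminf_Un_cv _ _ (Un_cv_subseq _ _ phi Hphi Hcvc))
                  (is_liminf_Un_cv _ _ (Un_cv_subseq _ _ phi Hphi Hcvp)) (not_eq_sym Hcp_ne)).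
  lra.
Qed.

End Iterates.

End FirmlyVicinal.

End BoundedCAT.

Theorem corollary5p2 (X : Type) (d : X -> X -> R) (kappa : R) (T : X -> X) :
  0 < kappa -> is_metric d -> CAT kappa d -> complete d ->
  (forall v v', d v v' < Dk kappa / 2) ->
  firmly_vicinal kappa d T ->
  (exists z, T z = z) ->
  forall x : X, exists p, T p = p /\ Delta_conv d (fun n => Nat.iter n T x) p.
Proof.
  intros Hk Hm Hcat Hc Hdiam Hv Hfix x.
  destruct (iterates_cos_center d kappa Hk Hm Hcat Hdiam T Hv x Hfix Hc (fun i => i)
              (fun i => Nat.lt_succ_diag_r i)) as [p [Hp Hcp]].
  exists p. split; [exact Hp|].
  apply (Delta_conv_of_cos_center d kappa Hk Hm Hdiam).
  exact (cos_center_subseq d kappa Hk Hm Hcat Hdiam T Hv x Hfix Hc p Hp Hcp).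
Qed.
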